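(* Let $G$ be a finite group and $\underline{\mathcal{F}}$ any indexing system. There exist levelwise $(G\times\Sigma_\bullet)$-equivalences of operads $f:\mathcal{SM}_{\varnothing}\to\varepsilon^*\mathscr{P}$ and $f':\mathcal{SM}_{\mathbf{O}(\underline{\mathbf{Set}})}\to\mathscr{P}_G$ such that $\Delta\circ f = f'\circ\iota$, where $\iota:\mathcal{SM}_\varnothing\subseteq\mathcal{SM}_{\mathbf{O}(\underline{\mathcal{F}})}\subseteq\mathcal{SM}_{\mathbf{O}(\underline{\mathbf{Set}})}$ are the inclusions and $\Delta:\varepsilon^*\mathscr{P}\to\mathscr{P}_G$ sends $\sigma\in\Sigma_n$ to the constant function $G\to\Sigma_n$ with value $\sigma$.
   Context: For a finite $H$-set $T$ with ordering, $\sigma:H\to\Sigma_{|T|}$ is its permutation representation and $\Gamma_T=\{(h,\sigma(h))\}$. $\widetilde X$ denotes chaotification (one morphism between any two objects), applied levelwise. For a set of exponents $\mathcal{N}$ (for each $H\subseteq G$ a set of ordered finite $H$-sets), $\mathcal{SM}_{\mathcal{N}}=\widetilde{\mathbb{F}(S_{\mathcal{N}})}$ with $\mathbb{F}$ the free operad on symmetric sequences of $G$-sets and $S_{\mathcal{N}}=(G\times\Sigma_0)/\Gamma_\varnothing\sqcup(G\times\Sigma_2)/\Gamma_{**}\sqcup\coprod_{T\in\mathcal{N}}(G\times\Sigma_{|T|})/\Gamma_T$. $\mathbf{O}(\underline{\mathcal{F}})$ is the set of exponents consisting of the nontrivial orbits $H/K\in\underline{\mathcal{F}}$ ($K\subsetneq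 H$), with orderings chosen once and for all for $\mathbf{O}(\underline{\mathbf{Set}})$ (all nontrivial orbits, the maximal indexing system), and free operads built with a common choice of $\Sigma$-orbit representatives so that the inclusions $S_\varnothing\subseteq S_{\mathbf{O}(\underline{\mathcal{F}})}\subseteq S_{\mathbf{O}(\underline{\mathbf{Set}})}$ induce inclusions of operads. $\mathscr{P}=\widetilde{\Sigma_\bullet}$ is the Barratt–Eccles operad, $\varepsilon^*\mathscr{P}$ it with trivial $G$-action, and $\mathscr{P}_G=\widetilde{\mathbf{Set}(G,\Sigma_\bullet)}$ with $(g,\tau)\cdot f=(x\mapsto\tau f(g^{-1}x))$ and pointwise operad structure. A levelwise $(G\times\Sigma_\bullet)$-equivalence induces equivalences of categories on $\Lambda$-fixed points for all $\Lambda\subseteq G\times\Sigma_n$, all $n$. An indexing system is in the sense of Blumberg–Hill. *)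

From HB Require Import structures.
From mathcomp Require Import all_boot all_order all_fingroup.
Set Implicit Arguments.
Unset Strict Implicit.
Unset Printing Implicit Defensive.

(*  * The finite group G is the whole finGroupType gT; subgroups H : {group gT}*)
(*  * Sigma_n = 'S_n.  MathComp's product of permutations is (s * t) x =       *)
(*    t (s x); function composition  rho o sigma  is therefore (sigma*rho)%g.  *)
(*    Subgroups of G x Sigma_n are the same subsets for either multiplication. *)
(*  * A finite H-set with an ordering is (n, a) with a : gT -> 'I_n -> 'I_n an *)
(*    action of H on {0,..,n-1}; a h is the permutation representation        *)
(*    sigma(h), and Gamma_T = {(h, sigma h) | h in H}.                         *)
(*  * All the categories involved are chaotic (X~), hence a functor between   *)
(*    them is just a map of object sets, a map of operads of chaotic          *)
(*    categories is a map of the underlying operads of object sets, and the   *)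
(*    Lambda-fixed category of X~ is the chaotic category on the Lambda-fixed *)
(*    objects.                                                                *)

Section Defs.
Variable gT : finGroupType.

Definition is_Hset (H : {set gT}) n (a : gT -> 'I_n -> 'I_n) :=
  (forall i, a 1%g i = i) /\
  (forall h h' i, h \in H -> h' \in H -> a (h * h')%g i = a h (a h' i)).

Definition Hequivariant (H : {set gT}) n m (a : gT -> 'I_n -> 'I_n)
  (b : gT -> 'I_m -> 'I_m) (f : 'I_n -> 'I_m) :=
  forall h i, h \in H -> f (a h i) = b h (f i).

(* The transitive H-set H/K (left cosets xK, x in H), ordered once and for  *)
(* all by the enumeration of the set of cosets; the action is h.(xK)=(hx)K.  *)
Definition coset_list (K H : {set gT}) : seq {set gT} := enum (lcosets K H).

Definition coset_act (K H : {set gT}) k (h : gT) (i : 'I_k) : 'I_k :=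
  let cs := coset_list K H in
  odflt i (insub (index ((h *: nth set0 cs i)%g) cs) : option 'I_k).

Definition orbit_size (K H : {set gT}) := #|lcosets K H|.

(* F H n a : the ordered finite H-set (n,a) belongs to F(H).                 *)
Definition indexing_system
  (F : {group gT} -> forall n, (gT -> 'I_n -> 'I_n) -> Prop) : Prop :=
  (forall (H : {group gT}) n, F H n (fun _ i => i)) /\
  (forall (H : {group gT}) n a m b, is_Hset H b -> F H n a ->
     (exists f : 'I_n -> 'I_m, bijective f /\ Hequivariant H a b f) ->
     F H m b) /\
  (forall (H K : {group gT}) n a, K \subset H -> F H n a -> F K n a) /\
  (forall (H : {group gT}) (g : gT) n a, F H n a ->
     F (H :^ g)%G n (fun k => a (g * k * g^-1)%g)) /\
  (forall (H : {group gT}) n a m b, is_Hset H b -> F H n a ->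
     (exists f : 'I_m -> 'I_n, injective f /\ Hequivariant H b a f) ->
     F H m b) /\
  (forall (H : {group gT}) n a m b p c, is_Hset H c -> F H n a -> F H m b ->
     (exists f : 'I_p -> 'I_n * 'I_m, bijective f /\
        forall h i, h \in H -> f (c h i) = (a h (f i).1, b h (f i).2)) ->
     F H p c) /\
  (forall (H : {group gT}) n a m b p c, is_Hset H c -> F H n a -> F H m b ->
     (exists f : 'I_p -> 'I_n + 'I_m, bijective f /\
        forall h i, h \in H -> f (c h i) =
          match f i with inl x => inl (a h x) | inr y => inr (b h y) end) ->
     F H p c) /\
  (* closed under self-induction: H/K in F(H), T in F(K) => H x_K T in F(H); *)
  (* H x_K T is characterised (up to iso) as an H-set X with an H-map        *)
  (* pi : X -> H/K whose fibre over the coset K is K-isomorphic to T.        *)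
  (forall (H K : {group gT}) m b p c, K \subset H ->
     F H (orbit_size K H) (@coset_act K H (orbit_size K H)) ->
     F K m b -> is_Hset H c ->
     (exists (pi : 'I_p -> 'I_(orbit_size K H)) (e : 'I_m -> 'I_p),
        Hequivariant H c (@coset_act K H (orbit_size K H)) pi /\
        injective e /\ Hequivariant K b c e /\
        (forall x, (nth set0 (coset_list K H) (pi x) == (K : {set gT}))
                   = (x \in [seq e y | y <- enum 'I_m]))) ->
     F H p c).

(* An admissibility predicate on pairs (H, K) describes the set of exponents *)
(* { H/K : K proper in H, admissible } (with the fixed orderings above).     *)
Definition exps := {group gT} -> {group gT} -> Prop.
Definition O_empty : exps := fun _ _ => False.
Definition O_of (F : {group gT} -> forall n, (gT -> 'I_n -> 'I_n) -> Prop) : exps := fun H K =>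
  F H (orbit_size K H) (@coset_act K H (orbit_size K H)).
Definition O_Set : exps := fun _ _ => True.

(* Generators of (G x Sigma_k)/Gamma_T: kinds are T = varnothing (arity 0,    *)
(* H = G), T = ** (arity 2, trivial G-set) and T = H/K.                       *)
Inductive gkind := GUnit | GMul | GOrb of {group gT} & {group gT}.

Definition kgrp (x : gkind) : {set gT} :=
  match x with GOrb H _ => H | _ => [set: gT] end.
Definition kact (x : gkind) k : gT -> 'I_k -> 'I_k :=
  match x with GOrb H K => @coset_act K H k | _ => fun _ i => i end.
Definition inGamma (x : gkind) k (h : gT) (t : 'S_k) : bool :=
  (h \in kgrp x) && [forall i, t i == @kact x k h i].

Definition gen_ok (N : exps) (x : gkind) k : Prop :=
  match x with
  | GUnit => k = 0
  | GMul => k = 2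
  | GOrb H K => K \proper H /\ N H K /\ k = orbit_size K H
  end.

(* Node x k g s cs : the generator [(g,s)] in (G x Sigma_k)/Gamma_T with its  *)
(* k inputs filled by cs;  Leaf j : the input labelled j.                    *)
Inductive tree :=
| Leaf of nat
| Node (x : gkind) (k : nat) (g : gT) (s : 'S_k) (cs : seq tree).
Arguments Node x k g s cs : clear implicits.

Fixpoint wf (N : exps) (t : tree) : Prop :=
  match t with
  | Leaf _ => True
  | Node x k _ _ cs => gen_ok N x k /\ size cs = k /\
      (fix allwf l := match l with [::] => True | c :: l => wf N c /\ allwf l end) cs
  end.

Fixpoint leaves (t : tree) : seq nat :=
  match t with
  | Leaf j => [:: j]
  | Node _ _ _ _ cs =>
      (fix lv l := match l with [::] => [::] | c :: l => leaves c ++ lv l end) cs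
  end.

(* t represents an element of F(S_N)(n) *)
Definition valid (N : exps) n (t : tree) := wf N t /\ perm_eq (leaves t) (iota 0 n).

Fixpoint tmap (fl : nat -> tree) (fg : gT -> gT) (t : tree) : tree :=
  match t with
  | Leaf j => fl j
  | Node x k g s cs => Node x k (fg g) s (map (tmap fl fg) cs)
  end.

Definition relabel (f : nat -> nat) := tmap (fun j => Leaf (f j)) id.
Definition permfun n (r : 'S_n) (j : nat) : nat :=
  match (insub j : option 'I_n) with Some i => r i | None => j end.

Definition tact n (l : gT * 'S_n) (t : tree) : tree :=
  relabel (permfun l.2) (tmap Leaf (fun y => l.1 * y)%g t).

Definition tcomp (i n : nat) (t u : tree) : tree :=
  tmap (fun j => if j < i then Leaf j
                 else if j == i then relabel (addn i) u
                 else Leaf (j + n).-1) id t.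

Definition tunit := Leaf 0.

Definition permute_seq k (r : 'S_k) (cs : seq tree) :=
  [seq nth (Leaf 0) cs (r i) | i <- enum 'I_k].

(* the equivalence relation whose classes are the elements of F(S_N)(n) *)
Inductive tequiv : tree -> tree -> Prop :=
| te_refl t : tequiv t t
| te_sym t u : tequiv t u -> tequiv u t
| te_trans t u v : tequiv t u -> tequiv u v -> tequiv t v
| te_coset x k g s h r cs : @inGamma x k h r ->
    tequiv (Node x k g s cs) (Node x k (g * h)%g (r * s)%g cs)
| te_perm x k g s (r : 'S_k) cs : size cs = k ->
    tequiv (Node x k g (s * r)%g cs) (Node x k g s (permute_seq r cs))
| te_cong x k g s cs1 c c' cs2 : tequiv c c' ->
    tequiv (Node x k g s (cs1 ++ c :: cs2)) (Node x k g s (cs1 ++ c' :: cs2)).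

(* the inclusions SM_empty <= SM_O(F) <= SM_O(Set) on representatives *)
Definition incl (t : tree) : tree := t.

(* sigma in Sigma_m is the word sigma(0) ... sigma(m-1); sigma o_i tau       *)
(* substitutes the word of tau (shifted by i) for the letter i.              *)
Definition permcomp (i m n p : nat) (s : 'S_m) (t : 'S_n) (u : 'S_p) : bool :=
  [seq (u q : nat) | q <- enum 'I_p] ==
  flatten [seq (let a := (s q : nat) in
                if a < i then [:: a]
                else if a == i then [seq (t r : nat) + i | r <- enum 'I_n]
                else [:: (a + n).-1]) | q <- enum 'I_m].

(* Target eps^* P : objects Sigma_n, trivial G-action, (g,rho).s = rho o s. *)
Definition eps_act n (l : gT * 'S_n) (s : 'S_n) : 'S_n := (s * l.2)%g.
(* Target P_G : objects Set(G, Sigma_n), (g,tau).f = (x |-> tau o f(g^-1 x)) *)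
Definition PG_act n (l : gT * 'S_n) (f : {ffun gT -> 'S_n}) : {ffun gT -> 'S_n} :=
  [ffun x => (f (l.1^-1 * x)%g * l.2)%g].

(* f : SM_N -> Y~ is a map of G-operads (well defined on classes, unital,   *)
(* compatible with partial compositions, G x Sigma_n-equivariant) and      *)
(* induces equivalences on Lambda-fixed (chaotic) categories for every      *)
(* subgroup Lambda of G x Sigma_n.  A functor between chaotic categories is *)
(* automatically fully faithful, and is essentially surjective iff every    *)
(* object of the target is isomorphic (always true) to one in the image,    *)
(* i.e. iff the source is nonempty whenever the target is.                  *)
Definition lw_equiv_eps (N : exps) (f : forall n, tree -> 'S_n) : Prop :=
  (forall n t u, valid N n t -> valid N n u -> tequiv t u -> f n t = f n u) /\
  f 1 tunit = 1%g /\
  (forall m n i t u, i < m -> valid N m t -> valid N n u ->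
     permcomp i (f m t) (f n u) (f (m + n).-1 (tcomp i n t u))) /\
  (forall n (l : gT * 'S_n) t, valid N n t -> f n (tact l t) = eps_act l (f n t)) /\
  (forall n (L : {group gT * 'S_n}),
     (exists y : 'S_n, forall l, l \in L -> eps_act l y = y) ->
     exists t, valid N n t /\ forall l, l \in L -> tequiv (tact l t) t).

Definition lw_equiv_PG (N : exps) (f : forall n, tree -> {ffun gT -> 'S_n}) : Prop :=
  (forall n t u, valid N n t -> valid N n u -> tequiv t u -> f n t = f n u) /\
  f 1 tunit = [ffun _ => 1%g] /\
  (forall m n i t u, i < m -> valid N m t -> valid N n u ->
     forall x, permcomp i (f m t x) (f n u x) (f (m + n).-1 (tcomp i n t u) x)) /\
  (forall n (l : gT * 'S_n) t, valid N n t -> f n (tact l t) = PG_act l (f n t)) /\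
  (forall n (L : {group gT * 'S_n}),
     (exists y : {ffun gT -> 'S_n}, forall l, l \in L -> PG_act l y = y) ->
     exists t, valid N n t /\ forall l, l \in L -> tequiv (tact l t) t).

Definition Delta n (s : 'S_n) : {ffun gT -> 'S_n} := [ffun _ => s].

End Defs.

From HB Require Import structures.
From mathcomp Require Import all_boot all_order all_fingroup.
From mathcomp Require Import zify.
From Stdlib Require List.

(** At a point [z] of [G], a tree is read as the word of its leaves, every
   generator permuting its inputs: a generator [(g, s)] of type [H/K] acts by
   [s] after the coset action of [coset_part H (g^-1 z)], the [H]-part of
   [g^-1 z] for a fixed choice of right [H]-coset representatives, while units
   and binary products act trivially.  This word respects the relations of the
   free operad, the [G x Sigma_n]-actions and partial composition, so the
   permutations spelled by the words give [f'] into [P_G], and [f] is [f'] at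
   [1].  On [SM_empty] no orbit generator occurs, so the word does not depend
   on [z], whence [Delta o f = f' o iota].
   All categories are chaotic, so it remains to find, for every [Lambda] fixing
   an object of the target, a tree fixed by [Lambda] up to the relations.  For
   [eps^* P] such a [Lambda] acts trivially on [Sigma_n] and the product of the
   [n] leaves will do.  For [P_G], [Lambda] is the graph of a homomorphism
   [sigma] on the subgroup [HL] of its first coordinates; the orbit of a point
   [a] is [HL/Ka] for the stabiliser [Ka] of [a] and is realised by a single
   generator of type [HL/Ka], and the product of these orbit trees is fixed. *)

Set Implicit Arguments.
Unset Strict Implicit.
Unset Printing Implicit Defensive.

Section PermutationWords.
Variable n : nat.
Implicit Types (p r : 'S_n) (w : seq nat).

Definition pword p : seq nat := [seq (p i : nat) | i <- enum 'I_n].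

Definition perm_of_word w : 'S_n := odflt 1%g [pick p | pword p == w].

Lemma pword_inj : injective pword.
Proof.
move=> p q /eq_in_map Epq; apply/permP => i; apply: val_inj.
by apply: Epq; rewrite mem_enum.
Qed.

Lemma pwordK : cancel pword perm_of_word.
Proof.
move=> p; rewrite /perm_of_word; case: pickP => [q /eqP/pword_inj //|].
by move/(_ p); rewrite eqxx.
Qed.

Lemma pword1 : pword 1%g = iota 0 n.
Proof. by rewrite /pword -val_enum_ord; apply: eq_map => i; rewrite perm1. Qed.

Lemma perm_eq_pword p : perm_eq (pword p) (iota 0 n).
Proof.
apply: uniq_perm; [|exact: iota_uniq|].
  by rewrite map_inj_uniq ?enum_uniq // => i j /val_inj/perm_inj.
move=> j; rewrite mem_iota add0n.
apply/mapP/idP => [[i _ ->] | j_lt]; first exact: ltn_ord.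
by exists ((p^-1)%g (Ordinal j_lt)); rewrite ?mem_enum // permKV.
Qed.

Lemma perm_of_wordK w : perm_eq w (iota 0 n) -> pword (perm_of_word w) = w.
Proof.
move=> w_perm; have size_w : size w = n by rewrite (perm_size w_perm) size_iota.
have uniq_w : uniq w by rewrite (perm_uniq w_perm) iota_uniq.
have w_lt (i : 'I_n) : nth 0 w i < n.
  have : nth 0 w i \in w by rewrite mem_nth ?size_w.
  by rewrite (perm_mem w_perm) mem_iota.
pose f (i : 'I_n) : 'I_n := Ordinal (w_lt i).
have f_inj : injective f.
  by move=> i j [] /eqP; rewrite nth_uniq ?size_w // => /eqP/val_inj.
suff pword_f : pword (perm f_inj) = w by rewrite -pword_f pwordK.
rewrite /pword (eq_map (g := nth 0 w \o val)) => [|i]; last by rewrite permE.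
by rewrite map_comp val_enum_ord -size_w -/(mkseq _ _) mkseq_nth.
Qed.

Lemma permfun_ord r (i : 'I_n) : permfun r i = r i.
Proof. by rewrite /permfun valK. Qed.

Lemma permfun1 j : permfun (1%g : 'S_n) j = j.
Proof. by rewrite /permfun; case: insubP => [i _ <-|_] //; rewrite perm1. Qed.

Lemma perm_of_word_permfun w r : perm_eq w (iota 0 n) ->
  perm_of_word (map (permfun r) w) = (perm_of_word w * r)%g.
Proof.
move=> w_perm; rewrite -{1}(perm_of_wordK w_perm) -map_comp -[RHS]pwordK.
by congr perm_of_word; apply: eq_map => i /=; rewrite permM permfun_ord.
Qed.

End PermutationWords.

Definition comp_letter i n (wu : seq nat) (j : nat) : seq nat :=
  if j < i then [:: j] else if j == i then map (addn i) wu else [:: (j + n).-1].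

Lemma permcompE i m n p (s : 'S_m) (t : 'S_n) (u : 'S_p) :
  permcomp i s t u = (pword u == flatten (map (comp_letter i n (pword t)) (pword s))).
Proof.
rewrite /permcomp /pword -map_comp; congr (_ == flatten _); apply: eq_map => q /=.
rewrite /comp_letter; case: ifP => // _; case: ifP => // _.
by rewrite -map_comp; apply: eq_map => r /=; rewrite addnC.
Qed.

Lemma perm_eq_comp_letter i m n wt wu : i < m ->
  perm_eq wt (iota 0 m) -> perm_eq wu (iota 0 n) ->
  perm_eq (flatten (map (comp_letter i n wu) wt)) (iota 0 (m + n).-1).
Proof.
move=> lt_im wt_perm wu_perm.
apply: perm_trans (perm_flatten (perm_map _ wt_perm)) _.
set r := m - i.+1.
have -> : iota 0 m = iota 0 i ++ i :: iota i.+1 r.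
  by rewrite -[in LHS](subnKC (ltnW lt_im)) iotaD add0n -(subnSK lt_im).
have lowE : map (comp_letter i n wu) (iota 0 i) = [seq [:: j] | j <- iota 0 i].
  by apply/eq_in_map => j; rewrite mem_iota /comp_letter => /andP[_ ->].
have highE :
    map (comp_letter i n wu) (iota i.+1 r) = [seq [:: i + n + j] | j <- iota 0 r].
  rewrite -[i.+1]addn0 iotaDl -map_comp; apply: eq_map => j; rewrite /= /comp_letter.
  have [-> ->] : (i.+1 + j < i) = false /\ (i.+1 + j == i) = false by split; lia.
  by congr [:: _]; lia.
rewrite map_cat flatten_cat /= lowE highE !flatten_map1 {1}/comp_letter ltnn eqxx.
rewrite -iotaDl -[(m + n).-1](_ : i + (n + r) = _) ?iotaD ?add0n; last first.
  by rewrite /r; move: lt_im; clear; lia.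
by rewrite map_id addn0 perm_cat2l perm_cat2r -[i in iota i n]addn0 iotaDl perm_map.
Qed.

Lemma eq_map_In (A B : Type) (f g : A -> B) (s : seq A) :
  (forall a, List.In a s -> f a = g a) -> map f s = map g s.
Proof.
elim: s => //= a s IHs fg; rewrite fg; last by left.
by rewrite IHs // => b s_b; apply: fg; right.
Qed.

Lemma In_map_inv (A B : Type) (f : A -> B) (s : seq A) b :
  List.In b (map f s) -> exists a, b = f a.
Proof. by elim: s => //= a s IHs [<-|/IHs //]; exists a. Qed.
Arguments In_map_inv {A B f s b}.

Lemma nth_nil_map (A B : Type) (h : seq A -> seq B) (ss : seq (seq A)) j :
  h [::] = [::] -> nth [::] (map h ss) j = h (nth [::] ss j).
Proof.
move=> h0; case: (ltnP j (size ss)) => j_ss; first by rewrite (nth_map [::]).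
by rewrite !nth_default ?size_map.
Qed.

Lemma flatten_map_flatten (A B : Type) (h : A -> seq B) (ss : seq (seq A)) :
  flatten [seq flatten (map h s) | s <- ss] = flatten (map h (flatten ss)).
Proof. by elim: ss => //= s ss ->; rewrite map_cat flatten_cat. Qed.

Section Trees.
Variable gT : finGroupType.
Implicit Types (t : tree gT) (cs : seq (tree gT)).

Lemma tree_nested_ind (P : tree gT -> Prop) :
  (forall j, P (Leaf gT j)) ->
  (forall x k g s cs, (forall c, List.In c cs -> P c) -> P (@Node gT x k g s cs)) ->
  forall t, P t.
Proof.
move=> PL PN; fix IH 1; case=> [j|x k g s cs]; first exact: PL.
apply: PN; elim: cs => [|c cs IHcs] d; first by case.
case=> [<-|]; [exact: IH | exact: IHcs].
Qed.

Lemma leaves_Node x k g s cs :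
  leaves (@Node gT x k g s cs) = flatten (map (@leaves gT) cs).
Proof. by elim: cs => //= c cs ->. Qed.

Lemma wf_Node N x k g s cs :
  wf N (@Node gT x k g s cs) <->
  [/\ gen_ok N x k, size cs = k & forall c, List.In c cs -> wf N c].
Proof.
have wf_cs : (fix allwf l := if l is c :: l then wf N c /\ allwf l else True) cs
             <-> (forall c, List.In c cs -> wf N c).
  elim: cs => [|c cs IHcs]; first by split=> // _ c [].
  split=> [[wf_c /IHcs wf_cs] d [<-|] // /wf_cs|wf_ccs] //.
  by split; [apply: wf_ccs; left | apply/IHcs => d cs_d; apply: wf_ccs; right].
by split=> [[ok [size_cs /wf_cs]]|[ok size_cs /wf_cs]].
Qed.

Lemma permute_seq_map k (r : 'S_k) (f : 'I_k -> tree gT) :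
  permute_seq r [seq f i | i <- enum 'I_k] = [seq f (r i) | i <- enum 'I_k].
Proof.
by apply: eq_map => i; rewrite (nth_map i) ?size_enum_ord // nth_ord_enum.
Qed.

End Trees.

Section Cosets.
Variables (gT : finGroupType) (H K : {group gT}).
Local Notation cosets := (coset_list K H).
Local Notation k := (orbit_size K H).

Lemma size_coset_list : size cosets = k.
Proof. by rewrite /coset_list /orbit_size cardE. Qed.

Lemma nth_coset_list (i : 'I_k) : nth set0 cosets i \in lcosets K H.
Proof. by rewrite -mem_enum mem_nth // size_coset_list. Qed.

Lemma nth_coset_list_inj (i j : 'I_k) :
  nth set0 cosets i = nth set0 cosets j -> i = j.
Proof.
by move/eqP; rewrite nth_uniq ?size_coset_list ?enum_uniq // => /eqP/val_inj.
Qed.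

Lemma index_coset_list C : C \in lcosets K H -> index C cosets < k.
Proof. by rewrite -size_coset_list index_mem mem_enum. Qed.

Lemma coset_act_nth h (i : 'I_k) : h \in H ->
  nth set0 cosets (coset_act K H h i) = (h *: nth set0 cosets i)%g.
Proof.
move=> hH; have hiK : (h *: nth set0 cosets i)%g \in lcosets K H.
  have /lcosetsP[x xH ->] := nth_coset_list i.
  by rewrite -lcosetM; apply/lcosetsP; exists (h * x)%g; rewrite ?groupM.
by rewrite /coset_act insubT ?index_coset_list //= => _; rewrite nth_index ?mem_enum.
Qed.

Lemma coset_actM h h' (i : 'I_k) : h \in H -> h' \in H ->
  coset_act K H h (coset_act K H h' i) = coset_act K H (h * h')%g i.
Proof.
by move=> hH h'H; apply: nth_coset_list_inj; rewrite !coset_act_nth ?groupM ?lcosetM.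
Qed.

Lemma coset_act1 (i : 'I_k) : coset_act K H 1%g i = i.
Proof. by apply: nth_coset_list_inj; rewrite coset_act_nth ?lcoset1. Qed.

Lemma coset_act_inj h : h \in H -> injective (@coset_act gT K H k h).
Proof.
move=> hH i j /(congr1 (coset_act K H h^-1)).
by rewrite !coset_actM ?groupV // mulVg !coset_act1.
Qed.

End Cosets.

Definition coset_part (gT : finGroupType) (H : {set gT}) (y : gT) : gT :=
  (y * (repr (H :* y))^-1)%g.

Lemma coset_part_mem (gT : finGroupType) (H : {group gT}) y : coset_part H y \in H.
Proof.
have := mem_repr_rcoset H y; rewrite mem_rcoset.
by rewrite -groupV invMg invgK.
Qed.

Lemma coset_partMl (gT : finGroupType) (H : {group gT}) h y : h \in H ->
  coset_part H (h * y) = (h * coset_part H y)%g.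
Proof. by move=> hH; rewrite /coset_part rcosetM rcoset_id // mulgA. Qed.

Section TreeWords.
Variable gT : finGroupType.
Implicit Types (t u : tree gT) (cs : seq (tree gT)) (x : gkind gT) (y z : gT).

Definition gen_act x k y : 'I_k -> 'I_k :=
  if x is GOrb H K then coset_act K H (coset_part H y) else id.

(* Ill-formed orbit nodes get the empty word, so that [word] respects every
   generating relation of [tequiv], also those between invalid trees. *)
Definition arity_ok x k : bool :=
  if x is GOrb H K then k == orbit_size K H else true.

Fixpoint word z t : seq nat :=
  match t with
  | Leaf j => [:: j]
  | @Node _ x k g s cs =>
      if arity_ok x k then
        flatten [seq nth [::] (map (word z) cs) (s (gen_act x (g^-1 * z)%g i))
                | i <- enum 'I_k]
      else [::]
  end.

Lemma word_Node z x k g s cs : word z (@Node gT x k g s cs) =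
  if arity_ok x k then
    flatten [seq nth [::] (map (word z) cs) (s (gen_act x (g^-1 * z)%g i))
            | i <- enum 'I_k]
  else [::].
Proof. by []. Qed.

Lemma gen_act_Gamma x k h (r : 'S_k) y i : inGamma x h r -> arity_ok x k ->
  r (gen_act x (h^-1 * y)%g i) = gen_act x y i.
Proof.
case/andP=> hG /forallP r_act; case: x hG r_act => [||H K] hH r_act ok.
1, 2: exact/eqP/r_act.
move/eqP: ok => def_k; subst k; rewrite (eqP (r_act _)) /= coset_partMl ?groupV //.
by rewrite coset_actM ?mulKVg // groupM ?groupV ?coset_part_mem.
Qed.

Lemma eq_word_Node z x k g g' (s s' : 'S_k) cs cs' :
  (forall i, nth [::] (map (word z) cs) (s (gen_act x (g^-1 * z)%g i))
             = nth [::] (map (word z) cs') (s' (gen_act x (g'^-1 * z)%g i))) ->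
  word z (@Node gT x k g s cs) = word z (@Node gT x k g' s' cs').
Proof. by move=> E; rewrite !word_Node (eq_map E). Qed.

Lemma word_tequiv z t u : tequiv t u -> word z t = word z u.
Proof.
elim=> {t u} [//|t u _ -> //|t u v _ -> _ -> //|x k g s h r cs Gamma_hr
             |x k g s r cs size_cs|x k g s cs1 c c' cs2 _ IH].
- case ok: (arity_ok x k); last by rewrite !word_Node ok.
  apply: eq_word_Node => i.
  by rewrite permM invMg -mulgA (gen_act_Gamma _ _ Gamma_hr ok).
- apply: eq_word_Node => i; rewrite permM /permute_seq -map_comp.
  rewrite (nth_map (Leaf gT 0)) ?size_cs //.
  by rewrite (nth_map i [::]) ?size_enum_ord // nth_ord_enum.
- by apply: (@eq_word_Node z x k g g s s) => i; rewrite !map_cat /= IH.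
Qed.

Lemma arity_ok_gen N x k : gen_ok N x k -> arity_ok x k.
Proof. by case: x => [||H K] /=; [by [] | by [] | case=> _ [_ ->]]. Qed.

Lemma gen_act_inj N x k y : gen_ok N x k -> injective (@gen_act x k y).
Proof.
case: x => [||H K] /=; [by move=> _ i j | by move=> _ i j | case=> _ [_ ->]].
exact/coset_act_inj/coset_part_mem.
Qed.

Lemma perm_eq_word_leaves N z t : wf N t -> perm_eq (word z t) (leaves t).
Proof.
elim/tree_nested_ind: t => [//|x k g s cs IH] /wf_Node[ok size_cs wf_cs].
rewrite word_Node leaves_Node (arity_ok_gen ok).
have act_inj : injective (fun i => s (gen_act x (g^-1 * z)%g i)).
  by move=> i j /perm_inj/(gen_act_inj ok).
have -> : [seq nth [::] (map (word z) cs) (s (gen_act x (g^-1 * z)%g i))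
          | i <- enum 'I_k] = map (nth [::] (map (word z) cs)) (pword (perm act_inj)).
  by rewrite /pword -map_comp; apply: eq_map => i /=; rewrite permE.
apply: perm_trans (perm_flatten (perm_map _ (perm_eq_pword _))) _.
rewrite -/(mkseq _ _) -size_cs -(size_map (word z)) mkseq_nth.
elim: cs IH wf_cs {size_cs} => //= c cs IHcs IH wf_cs.
apply: perm_cat; first by apply: IH; [left | apply: wf_cs; left].
by apply: IHcs => d cs_d; [apply: IH | apply: wf_cs]; right.
Qed.

Lemma word_tmap z fl t :
  word z (tmap fl id t) = flatten [seq word z (fl j) | j <- word z t].
Proof.
elim/tree_nested_ind: t => [j|x k g s cs IH]; first by rewrite /= cats0.
rewrite [tmap _ _ _]/= !word_Node; case: ifP => // _.
rewrite -map_comp (eq_map_In (g := fun c => flatten [seq word z (fl j) | j <- word z c])).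
  rewrite -flatten_map_flatten -map_comp; congr flatten; apply: eq_map => i /=.
  by rewrite (map_comp (fun w => flatten (map _ w))) nth_nil_map.
by move=> c /IH.
Qed.

Lemma word_relabel z f t : word z (relabel f t) = map f (word z t).
Proof. by rewrite word_tmap flatten_map1. Qed.

Lemma word_tmap_mull z a t :
  word z (tmap (Leaf gT) (fun y => a * y)%g t) = word (a^-1 * z)%g t.
Proof.
elim/tree_nested_ind: t => [//|x k g s cs IH].
rewrite [tmap _ _ _]/= !word_Node invMg -mulgA -map_comp.
by rewrite (eq_map_In (g := word (a^-1 * z)%g)) // => c /IH.
Qed.

Lemma word_tact n z (l : gT * 'S_n) t :
  word z (tact l t) = map (permfun l.2) (word (l.1^-1 * z)%g t).
Proof. by rewrite /tact word_relabel word_tmap_mull. Qed.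

Lemma word_tcomp z i n t u :
  word z (tcomp i n t u) = flatten (map (comp_letter i n (word z u)) (word z t)).
Proof.
rewrite /tcomp word_tmap; congr flatten; apply: eq_map => j.
by rewrite /comp_letter; case: ifP => // _; case: ifP => // _; rewrite word_relabel.
Qed.

End TreeWords.

Section OperadMaps.
Variable gT : finGroupType.
Implicit Types (t u : tree gT) (ts : seq (tree gT)) (N : exps gT).

Definition SM_to_PG n t : {ffun gT -> 'S_n} := [ffun z => perm_of_word n (word z t)].

Definition SM_to_P n t : 'S_n := SM_to_PG n t 1%g.

Lemma SM_to_PGE n t z : SM_to_PG n t z = perm_of_word n (word z t).
Proof. exact: ffunE. Qed.

Lemma perm_eq_word_valid N n z t : valid N n t -> perm_eq (word z t) (iota 0 n).
Proof. by case=> wf_t; apply: perm_trans (perm_eq_word_leaves z wf_t). Qed.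

Lemma pword_SM_to_PG N n t z : valid N n t -> pword (SM_to_PG n t z) = word z t.
Proof.
by move=> t_valid; rewrite SM_to_PGE perm_of_wordK // (perm_eq_word_valid z t_valid).
Qed.

Lemma SM_to_PG_tequiv n t u : tequiv t u -> SM_to_PG n t = SM_to_PG n u.
Proof. by move=> tu; apply/ffunP => z; rewrite !SM_to_PGE (word_tequiv z tu). Qed.

Lemma SM_to_PG_unit : SM_to_PG 1 (tunit gT) = [ffun _ => 1%g].
Proof.
apply/ffunP => z; rewrite SM_to_PGE ffunE.
have -> : word z (tunit gT) = pword (1%g : 'S_1) by rewrite pword1.
exact: pwordK.
Qed.

Lemma SM_to_PG_tcomp N m n i t u z : i < m -> valid N m t -> valid N n u ->
  permcomp i (SM_to_PG m t z) (SM_to_PG n u z) (SM_to_PG (m + n).-1 (tcomp i n t u) z).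
Proof.
move=> lt_im t_valid u_valid; have wt := perm_eq_word_valid z t_valid.
have wu := perm_eq_word_valid z u_valid.
rewrite permcompE (pword_SM_to_PG z t_valid) (pword_SM_to_PG z u_valid).
by rewrite SM_to_PGE word_tcomp perm_of_wordK // perm_eq_comp_letter.
Qed.

Lemma SM_to_PG_tact N n (l : gT * 'S_n) t :
  valid N n t -> SM_to_PG n (tact l t) = PG_act l (SM_to_PG n t).
Proof.
move=> t_valid; apply/ffunP => z; rewrite /PG_act !ffunE word_tact.
by rewrite perm_of_word_permfun // (perm_eq_word_valid _ t_valid).
Qed.

Lemma wf_O_empty N t : wf (@O_empty gT) t -> wf N t.
Proof.
elim/tree_nested_ind: t => [//|x k g s cs IH] /wf_Node[ok size_cs wf_cs].
apply/wf_Node; split=> [|//|c cs_c]; last exact: IH (wf_cs _ cs_c).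
by case: x ok {IH wf_cs} => [||H K] // [_ []].
Qed.

Lemma valid_O_empty N n t : valid (@O_empty gT) n t -> valid N n t.
Proof. by case=> /(wf_O_empty N). Qed.

Lemma word_O_empty z z' t : wf (@O_empty gT) t -> word z t = word z' t.
Proof.
elim/tree_nested_ind: t => [//|x k g s cs IH] /wf_Node[ok _ wf_cs].
have gen_act_id y : @gen_act gT x k y = id.
  by case: x ok {IH wf_cs} => [||H K] // [_ []].
rewrite !word_Node !gen_act_id (eq_map_In (g := word z')) // => c cs_c.
exact: IH (wf_cs _ cs_c).
Qed.

Lemma Delta_SM_to_P n t : wf (@O_empty gT) t -> Delta gT (SM_to_P n t) = SM_to_PG n t.
Proof.
by move=> wf_t; apply/ffunP => z; rewrite /SM_to_P !ffunE (word_O_empty z 1%g wf_t).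
Qed.

Lemma SM_to_P_tact n (l : gT * 'S_n) t :
  valid (@O_empty gT) n t -> SM_to_P n (tact l t) = eps_act l (SM_to_P n t).
Proof.
move=> t_valid; rewrite /SM_to_P (SM_to_PG_tact l t_valid) /PG_act ffunE.
by rewrite !SM_to_PGE (word_O_empty _ 1%g (proj1 t_valid)).
Qed.

Fixpoint comb ts : tree gT :=
  match ts with
  | [::] => @Node gT (GUnit gT) 0 1%g 1%g [::]
  | [:: t] => t
  | t :: ts' => @Node gT (GMul gT) 2 1%g 1%g [:: t; comb ts']
  end.

Lemma leaves_comb ts : leaves (comb ts) = flatten (map (@leaves gT) ts).
Proof.
elim: ts => // t [|t' ts] IH; rewrite /= cats0 //.
by congr (_ ++ _); exact: IH.
Qed.

Lemma wf_comb N ts : (forall t, List.In t ts -> wf N t) -> wf N (comb ts).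
Proof.
elim: ts => [|t [|t' ts] IH] wf_ts //=; first by apply: wf_ts; left.
do 2!split=> //; split; first by apply: wf_ts; left.
by split=> //; apply: IH => c ts_c; apply: wf_ts; right.
Qed.

Lemma tequiv_mulr_Gamma1 x k g h (s : 'S_k) cs :
  inGamma x h (1 : 'S_k) -> tequiv (@Node gT x k g s cs) (Node x (g * h)%g s cs).
Proof. by move=> Gamma_h; have := te_coset g s cs Gamma_h; rewrite mul1g. Qed.

Lemma tact_comb n (l : gT * 'S_n) ts :
  (forall t, List.In t ts -> tequiv (tact l t) t) -> tequiv (tact l (comb ts)) (comb ts).
Proof.
have Gamma1 x k : x = GUnit gT \/ x = GMul gT -> inGamma x l.1 (1 : 'S_k).
  by case=> ->; rewrite /inGamma in_setT; apply/forallP => i; rewrite perm1.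
elim: ts => [|t [|t' ts] IH] ts_fixed; last first.
- set c := comb (t' :: ts).
  change (tequiv (Node (GMul gT) (l.1 * 1)%g (1 : 'S_2) [:: tact l t; tact l c])
                 (Node (GMul gT) 1 (1 : 'S_2) [:: t; c])).
  have fixed_t := ts_fixed t (or_introl erefl).
  have fixed_c : tequiv (tact l c) c by apply: IH => u tu; apply: ts_fixed; right.
  apply: te_trans; first exact: (@te_cong _ _ 2 _ 1%g [::] _ _ _ fixed_t).
  apply: te_trans; first exact: (@te_cong _ _ 2 _ 1%g [:: t] _ _ [::] fixed_c).
  by apply: te_sym; rewrite mulg1 -{1}(mul1g l.1); apply/tequiv_mulr_Gamma1/Gamma1; right.
- by apply: ts_fixed; left.
change (tequiv (Node (GUnit gT) (l.1 * 1)%g (1 : 'S_0) [::])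
               (Node (GUnit gT) 1 (1 : 'S_0) [::])).
by apply: te_sym; rewrite mulg1 -{1}(mul1g l.1); apply/tequiv_mulr_Gamma1/Gamma1; left.
Qed.

Lemma fixed_tree_P n (L : {group gT * 'S_n}) :
  (exists y : 'S_n, forall l, l \in L -> eps_act l y = y) ->
  exists t, valid (@O_empty gT) n t /\ forall l, l \in L -> tequiv (tact l t) t.
Proof.
case=> y y_fixed; have L_snd l : l \in L -> l.2 = 1%g.
  by move/y_fixed => yl; apply: (mulgI y); rewrite mulg1.
exists (comb [seq Leaf gT j | j <- iota 0 n]); split; first split.
- by apply: wf_comb => c /In_map_inv[j ->].
- by rewrite leaves_comb -map_comp flatten_map1 map_id.
move=> l /L_snd l2; apply: tact_comb => c /In_map_inv[j ->].
by rewrite /tact /relabel /= l2 permfun1; apply: te_refl.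
Qed.

Lemma SM_to_P_lw_equiv : lw_equiv_eps (@O_empty gT) SM_to_P.
Proof.
split=> [n t u _ _ tu|]; first by rewrite /SM_to_P (SM_to_PG_tequiv n tu).
split; first by rewrite /SM_to_P SM_to_PG_unit ffunE.
split=> [m n i t u lt_im t_valid u_valid|].
  exact: SM_to_PG_tcomp 1%g lt_im t_valid u_valid.
split=> [n l t|n L]; [exact: SM_to_P_tact | exact: fixed_tree_P].
Qed.

End OperadMaps.

Section FixedPointsPG.
Variables (gT : finGroupType) (n : nat) (L : {group gT * 'S_n}).
Variable y : {ffun gT -> 'S_n}.
Hypothesis L_fixes_y : forall l, l \in L -> PG_act l y = y.

Lemma L_fixes_y_at l z : l \in L -> (y (l.1^-1 * z) * l.2)%g = y z.
Proof.
move=> lL; have := congr1 (fun f : {ffun gT -> 'S_n} => f z) (L_fixes_y lL).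
by rewrite ffunE.
Qed.

Lemma L_fst_inj l l' : l \in L -> l' \in L -> l.1 = l'.1 -> l = l'.
Proof.
move=> lL l'L eq_l1; have eq_l2 : l.2 = l'.2.
  apply: (mulgI (y (l.1^-1 * 1)%g)).
  by rewrite (L_fixes_y_at 1 lL) eq_l1 (L_fixes_y_at 1 l'L).
by move: eq_l1 eq_l2; case: l {lL} => a b; case: l' {l'L} => c d /= -> ->.
Qed.

Lemma L_snd_commute l l' : l \in L -> l' \in L -> commute l.2 l'.2.
Proof.
move=> lL l'L; apply: (mulgI (y 1%g)).
have := L_fixes_y_at (l.1 * l'.1) (groupM lL l'L); rewrite /= mulVg => E1.
have := L_fixes_y_at (l.1 * l'.1) lL; rewrite mulKg => E2.
have := L_fixes_y_at l'.1 l'L; rewrite mulVg => E3.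
by rewrite E1 -E2 -E3 -mulgA.
Qed.

Definition sigma (x : gT) : 'S_n := odflt 1%g (omap snd [pick l in L | l.1 == x]).

Lemma sigmaE l : l \in L -> sigma l.1 = l.2.
Proof.
move=> lL; rewrite /sigma; case: pickP => [l' /andP[l'L /eqP eq_l1]|/(_ l)].
  by rewrite (L_fst_inj l'L lL eq_l1).
by rewrite lL eqxx.
Qed.

Lemma L_fst_group_set : group_set [set l.1 | l in L].
Proof.
apply/group_setP; split; first by apply/imsetP; exists 1%g; rewrite ?group1.
move=> _ _ /imsetP[l lL ->] /imsetP[l' l'L ->]; apply/imsetP.
by exists (l * l')%g; rewrite ?groupM.
Qed.

Definition HL : {group gT} := Group L_fst_group_set.

Lemma mem_HL l : l \in L -> l.1 \in HL.
Proof. by move=> lL; apply/imsetP; exists l. Qed.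

Lemma mem_L_sigma x : x \in HL -> (x, sigma x) \in L.
Proof. by case/imsetP=> l lL ->; rewrite sigmaE //; case: l lL. Qed.

Lemma sigmaM : {in HL &, {morph sigma : x x' / (x * x')%g}}.
Proof.
by move=> x x' xH x'H; apply: (sigmaE (groupM (mem_L_sigma xH) (mem_L_sigma x'H))).
Qed.

Lemma sigma_commute x x' : x \in HL -> x' \in HL -> commute (sigma x) (sigma x').
Proof. by move=> xH x'H; apply: L_snd_commute (mem_L_sigma xH) (mem_L_sigma x'H). Qed.

Lemma sigmaV x : x \in HL -> sigma x^-1 = (sigma x)^-1%g.
Proof. by move=> xH; apply: (sigmaE (groupVr (mem_L_sigma xH))). Qed.

Lemma sigma1 : sigma 1%g = 1%g.
Proof. exact: (sigmaE (group1 L)). Qed.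

Definition L_orbit (a : 'I_n) : {set 'I_n} := [set l.2 a | l : gT * 'S_n in L].

Lemma L_orbit_refl a : a \in L_orbit a.
Proof. by apply/imsetP; exists 1%g; rewrite ?group1 ?perm1. Qed.

Section OrbitTree.
Variable a : 'I_n.

Lemma stab_group_set : group_set [set x in HL | sigma x a == a].
Proof.
apply/group_setP; split; first by rewrite inE group1 sigma1 perm1 eqxx.
move=> x x'; rewrite !inE => /andP[xH /eqP xa] /andP[x'H /eqP x'a].
by rewrite groupM // sigmaM // permM xa x'a eqxx.
Qed.

Definition Ka : {group gT} := Group stab_group_set.

Lemma Ka_sub : Ka \subset HL.
Proof. by apply/subsetP => x; rewrite inE => /andP[]. Qed.

Lemma mem_Ka x : (x \in Ka) = (x \in HL) && (sigma x a == a).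
Proof. by rewrite inE. Qed.

Local Notation k := (orbit_size Ka HL).
Local Notation cosets := (coset_list Ka HL).

Definition coset_point (C : {set gT}) : 'I_n := sigma (repr C) a.

Lemma coset_pointE x : x \in HL -> coset_point (x *: Ka)%g = sigma x a.
Proof.
move=> xH; have := mem_repr _ (lcoset_refl Ka x); rewrite mem_lcoset /coset_point.
set r := repr _; rewrite mem_Ka => /andP[xrH /eqP xra].
by rewrite -(mulKVg x r) sigmaM // sigma_commute // permM xra.
Qed.

Definition orbit_point (i : 'I_k) : nat := coset_point (nth set0 cosets i).

Lemma permfun_orbit_point l (i : 'I_k) : l \in L ->
  permfun l.2 (orbit_point i) = orbit_point (coset_act Ka HL l.1 i).
Proof.
move=> lL; rewrite /orbit_point coset_act_nth ?mem_HL //.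
have /lcosetsP[x xH ->] := nth_coset_list i.
rewrite -lcosetM !coset_pointE ?groupM ?mem_HL // permfun_ord sigmaM ?mem_HL //.
by rewrite -(sigmaE lL) sigma_commute ?mem_HL // permM.
Qed.

Lemma orbit_point_inj : injective orbit_point.
Proof.
move=> i j /val_inj eq_ij; apply: nth_coset_list_inj.
have /lcosetsP[x xH Ex] := nth_coset_list i.
have /lcosetsP[x' x'H Ex'] := nth_coset_list j.
rewrite /orbit_point Ex Ex' !coset_pointE // in eq_ij *.
apply/lcoset_eqP; rewrite mem_lcoset mem_Ka groupM ?groupV //=.
by rewrite sigmaM ?groupV // sigma_commute ?groupV // permM eq_ij sigmaV // permK.
Qed.

Lemma orbit_point_mem (i : 'I_k) : exists2 b, b \in L_orbit a & val b = orbit_point i.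
Proof.
have /lcosetsP[x xH Ex] := nth_coset_list i.
exists (coset_point (nth set0 cosets i)) => //.
by rewrite Ex coset_pointE //; apply/imsetP; exists (x, sigma x); rewrite ?mem_L_sigma.
Qed.

Lemma orbit_point_surj b : b \in L_orbit a -> exists i, orbit_point i = val b.
Proof.
case/imsetP=> l lL ->.
have lK : (l.1 *: Ka)%g \in lcosets Ka HL by apply/lcosetsP; exists l.1; rewrite ?mem_HL.
exists (Ordinal (index_coset_list lK)).
by rewrite /orbit_point /= nth_index ?mem_enum // coset_pointE ?mem_HL // sigmaE.
Qed.

Lemma L_fixes_point_of_not_proper l : ~~ (Ka \proper HL) -> l \in L -> l.2 a = a.
Proof.
rewrite properE Ka_sub negbK => HL_Ka lL.
by have := subsetP HL_Ka _ (mem_HL lL); rewrite mem_Ka sigmaE // => /andP[_ /eqP].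
Qed.

(* A one-point orbit [HL/HL] is not a generator: it is represented by a leaf. *)
Definition orbit_tree : tree gT :=
  if Ka \proper HL then
    Node (GOrb HL Ka) 1%g (1 : 'S_k) [seq Leaf gT (orbit_point i) | i <- enum 'I_k]
  else Leaf gT a.

Lemma wf_orbit_tree : wf (@O_Set gT) orbit_tree.
Proof.
rewrite /orbit_tree; case: ifP => // Ka_proper; apply/wf_Node.
split=> [//|| c /In_map_inv[i ->] //]; by rewrite size_map size_enum_ord.
Qed.

Lemma leaves_orbit_tree :
  [/\ uniq (leaves orbit_tree), all (fun j => j < n) (leaves orbit_tree)
    & forall b : 'I_n, (val b \in leaves orbit_tree) = (b \in L_orbit a)].
Proof.
rewrite /orbit_tree; case: ifP => [_|/negbT Ka_HL]; last first.
  have orbit_a b : (b \in L_orbit a) = (b == a).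
    apply/imsetP/eqP => [[l lL ->]|->]; last by exists 1%g; rewrite ?group1 ?perm1.
    exact: L_fixes_point_of_not_proper.
  by split=> //= [|b]; rewrite ?andbT ?inE ?orbit_a.
rewrite leaves_Node -map_comp flatten_map1; split.
- by rewrite map_inj_uniq ?enum_uniq //; apply: orbit_point_inj.
- apply/allP => _ /mapP[i _ ->]; have [b _ <-] := orbit_point_mem i; exact: ltn_ord.
move=> b; apply/mapP/idP => [[i _ Ei]|/orbit_point_surj[i Ei]]; last first.
  by exists i; rewrite ?mem_enum ?Ei.
have [b' b'_orbit Eb'] := orbit_point_mem i.
by rewrite (_ : b = b') //; apply: val_inj; rewrite Ei Eb'.
Qed.

Lemma tact_orbit_tree l : l \in L -> tequiv (tact l orbit_tree) orbit_tree.
Proof.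
move=> lL; rewrite /orbit_tree; case: ifP => [_|/negbT Ka_HL]; last first.
  by rewrite /tact /relabel /= permfun_ord L_fixes_point_of_not_proper //; apply: te_refl.
pose rho : 'S_k := perm (@coset_act_inj _ HL Ka _ (mem_HL lL)).
set cs := [seq Leaf gT (orbit_point i) | i <- enum 'I_k].
have -> : tact l (Node (GOrb HL Ka) 1%g (1 : 'S_k) cs)
          = Node (GOrb HL Ka) l.1 (1 : 'S_k) (permute_seq rho cs).
  rewrite /tact /relabel /= mulg1 /cs permute_seq_map -!map_comp; congr Node.
  by apply: eq_map => i /=; rewrite permE permfun_orbit_point.
apply: te_sym; apply: te_trans.
  have := @te_coset gT (GOrb HL Ka) k 1%g 1%g l.1 rho cs; rewrite mul1g mulg1; apply.
  by rewrite /inGamma mem_HL //=; apply/forallP => i; rewrite permE.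
by rewrite -{1}(mul1g rho); apply: te_perm; rewrite size_map size_enum_ord.
Qed.

End OrbitTree.

Definition L_stable (S : {set 'I_n}) := forall l b, l \in L -> b \in S -> l.2 b \in S.

Lemma L_orbit_stable a : L_stable (L_orbit a).
Proof.
move=> l b lL /imsetP[l' l'L ->]; apply/imsetP.
by exists (l' * l)%g; rewrite ?groupM //= permM.
Qed.

Lemma L_orbit_back a l b : l \in L -> l.2 b \in L_orbit a -> b \in L_orbit a.
Proof. by move=> lL /(L_orbit_stable (groupVr lL)); rewrite /= permK. Qed.

Definition fixed_forest (ts : seq (tree gT)) (S : {set 'I_n}) :=
  [/\ forall t, List.In t ts ->
        wf (@O_Set gT) t /\ forall l, l \in L -> tequiv (tact l t) t,
      uniq (flatten (map (@leaves gT) ts)),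
      all (fun j => j < n) (flatten (map (@leaves gT) ts))
    & forall b : 'I_n, (val b \in flatten (map (@leaves gT) ts)) = (b \in S)].

Lemma exists_fixed_forest S : L_stable S -> exists ts, fixed_forest ts S.
Proof.
have [m] := ubnP #|S|; elim: m S => // m IH S /ltnSE card_S S_stable.
have [->|[a aS]] := set_0Vmem S; first by exists [::]; split=> // b; rewrite inE.
have orbit_sub b : b \in L_orbit a -> b \in S by case/imsetP=> l lL ->; apply: S_stable.
have [|l b lL|ts [ts_fixed uniq_ts lt_ts mem_ts]] := IH (S :\: L_orbit a).
- apply: leq_trans card_S; apply: proper_card; apply/properP.
  by split; [exact: subsetDl | exists a; rewrite // inE L_orbit_refl].
- rewrite !inE => /andP[b_orbit bS]; rewrite S_stable // andbT.
  by apply: contra b_orbit => /(L_orbit_back lL).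
have [uniq_o lt_o mem_o] := leaves_orbit_tree a.
exists (orbit_tree a :: ts); split.
- by move=> t [<-|/ts_fixed //]; split; [exact: wf_orbit_tree | exact: tact_orbit_tree].
- rewrite /= cat_uniq uniq_o uniq_ts andbT /=; apply/hasPn => j j_ts.
  have j_lt := allP lt_ts j j_ts; have := mem_ts (Ordinal j_lt).
  rewrite /= j_ts inE => /esym/andP[j_orbit _].
  by rewrite -[j]/(val (Ordinal j_lt)) mem_o.
- by rewrite /= all_cat lt_o.
move=> b; rewrite /= mem_cat mem_o mem_ts inE.
by case: (boolP (b \in L_orbit a)) => //= /orbit_sub ->.
Qed.

Lemma fixed_tree_PG :
  exists t, valid (@O_Set gT) n t /\ forall l, l \in L -> tequiv (tact l t) t.
Proof.
have [ts [ts_fixed uniq_ts lt_ts mem_ts]] :=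
  @exists_fixed_forest [set: 'I_n] (fun l b _ _ => in_setT _).
exists (comb ts); split; last by move=> l lL; apply: tact_comb => t /ts_fixed[_]; apply.
split; first by apply: wf_comb => t /ts_fixed[].
rewrite leaves_comb; apply: uniq_perm uniq_ts (iota_uniq 0 n) _ => j.
rewrite mem_iota add0n; apply/idP/idP => [/(allP lt_ts) //|j_lt].
by rewrite -[j]/(val (Ordinal j_lt)) mem_ts in_setT.
Qed.

End FixedPointsPG.

Lemma SM_to_PG_lw_equiv (gT : finGroupType) :
  lw_equiv_PG (@O_Set gT) (@SM_to_PG gT).
Proof.
split=> [n t u _ _|]; first exact: SM_to_PG_tequiv.
split; first exact: SM_to_PG_unit.
split=> [m n i t u lt_im t_valid u_valid z|].
  exact: SM_to_PG_tcomp z lt_im t_valid u_valid.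
split=> [n l t|n L [y y_fixed]]; [exact: SM_to_PG_tact | exact: fixed_tree_PG y_fixed].
Qed.

Theorem proposition4p16 (gT : finGroupType)
  (F : {group gT} -> forall n, (gT -> 'I_n -> 'I_n) -> Prop) :
  indexing_system F ->
  exists (f : forall n, tree gT -> 'S_n)
         (f' : forall n, tree gT -> {ffun gT -> 'S_n}),
    lw_equiv_eps (@O_empty gT) f /\
    lw_equiv_PG (@O_Set gT) f' /\
    (forall n t, valid (@O_empty gT) n t ->
       (* t in SM_empty, iota = SM_empty <= SM_O(F) <= SM_O(Set) *)
       (valid (O_of F) n (incl t) /\ valid (@O_Set gT) n (incl (incl t))) /\
       @Delta gT n (f n t) = f' n (incl (incl t))).
Proof.
move=> _; exists (@SM_to_P gT), (@SM_to_PG gT).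
split; first exact: SM_to_P_lw_equiv.
split; first exact: SM_to_PG_lw_equiv.
move=> n t t_valid; split; first by split; apply: valid_O_empty.
exact: Delta_SM_to_P (proj1 t_valid).
Qed.
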